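(* The variety of super-paraorthomodular lattices is not the largest subvariety of the variety of pseudo-Kleene lattices that contains no member isomorphic to $\mathbf B_6$ or to $\mathbf B_8$; that is, there is a variety $\mathcal V$ of pseudo-Kleene lattices containing no member isomorphic to $\mathbf B_6$ or to $\mathbf B_8$ such that $\mathcal V$ is not contained in the variety of super-paraorthomodular lattices.
   Context: A pseudo-Kleene lattice is an algebra $(A,\land,\lor,{}',0,1)$ that is a bounded lattice with an antitone involution ${}'$ ($x\leq y\Rightarrow y'\leq x'$, $x''=x$) satisfying $x\land x'\leq y\lor y'$. It is super-paraorthomodular if for all $x,y$: (SP1) $x\leq y$ and $x'\land y=(x\land x')\lor(y\land y')$ imply $y\land(x\lor x')=x\lor(y\land y')$; (SP2) $x\leq y$ implies $(x\land x')\lor(y\land y')=(x'\land y)\land(x'\land y)'$; super-paraorthomodular lattices form a variety. $\mathbf B_6$: the pseudo-Kleene lattice with elements $0,x,y,y',x',1$, covers $0\prec x\prec y\prec 1$, $0\prec y'\prec x'\prec 1$, involution $u\leftrightarrow u'$, $0\leftrightarrow1$. $\mathbf B_8$: elements $0,z',x,y,y',x',z,1$, covers $0\prec z'$, $z'\prec x\prec y\prec z$, $z'\prec y'\prec x'\prec z$, $z\prec 1$, involution $u\leftrightarrow u'$, $0\leftrightarrow 1$. *)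

From Stdlib Require Import List.

Record Alg := {
  car :> Type;
  ameet : car -> car -> car;
  ajoin : car -> car -> car;
  aneg : car -> car;
  azero : car;
  aone : car
}.

Arguments ameet {a} _ _.
Arguments ajoin {a} _ _.
Arguments aneg {a} _.
Arguments azero {a}.
Arguments aone {a}.

Definition ale {A : Alg} (x y : A) : Prop := ameet x y = x.

Definition is_PKL (A : Alg) : Prop :=
  (forall x y : A, ameet x y = ameet y x) /\
  (forall x y z : A, ameet x (ameet y z) = ameet (ameet x y) z) /\
  (forall x y : A, ajoin x y = ajoin y x) /\
  (forall x y z : A, ajoin x (ajoin y z) = ajoin (ajoin x y) z) /\
  (forall x y : A, ameet x (ajoin x y) = x) /\
  (forall x y : A, ajoin x (ameet x y) = x) /\
  (forall x : A, ameet azero x = azero) /\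
  (forall x : A, ajoin aone x = aone) /\
  (forall x : A, aneg (aneg x) = x) /\
  (forall x y : A, ale x y -> ale (aneg y) (aneg x)) /\
  (forall x y : A, ale (ameet x (aneg x)) (ajoin y (aneg y))).

Definition is_SPOML (A : Alg) : Prop :=
  (forall x y : A, ale x y ->
     ameet (aneg x) y = ajoin (ameet x (aneg x)) (ameet y (aneg y)) ->
     ameet y (ajoin x (aneg x)) = ajoin x (ameet y (aneg y))) /\
  (forall x y : A, ale x y ->
     ajoin (ameet x (aneg x)) (ameet y (aneg y)) =
     ameet (ameet (aneg x) y) (aneg (ameet (aneg x) y))).

Definition iso (A B : Alg) : Prop :=
  exists (f : A -> B) (g : B -> A),
    (forall a, g (f a) = a) /\ (forall b, f (g b) = b) /\
    (forall x y, f (ameet x y) = ameet (f x) (f y)) /\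
    (forall x y, f (ajoin x y) = ajoin (f x) (f y)) /\
    (forall x, f (aneg x) = aneg (f x)) /\
    f azero = azero /\ f aone = aone.

(* Terms and equations; a variety is the class of models of a set of
   equations (Birkhoff). *)
Inductive term : Type :=
| tVar : nat -> term
| tMeet : term -> term -> term
| tJoin : term -> term -> term
| tNeg : term -> term
| tZero : term
| tOne : term.

Fixpoint teval (A : Alg) (v : nat -> A) (t : term) : A :=
  match t with
  | tVar n => v n
  | tMeet s u => ameet (teval A v s) (teval A v u)
  | tJoin s u => ajoin (teval A v s) (teval A v u)
  | tNeg s => aneg (teval A v s)
  | tZero => azero
  | tOne => aone
  end.

Definition models (E : term * term -> Prop) (A : Alg) : Prop :=
  forall e, E e -> forall v : nat -> A, teval A v (fst e) = teval A v (snd e).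

(* ---- B6: 0 < x < y < 1, 0 < y' < x' < 1 ---- *)
Inductive b6 := b6_0 | b6_x | b6_y | b6_y' | b6_x' | b6_1.

(* side: true = left chain {x,y}, false = right chain {y',x'}; level 1 or 2 *)
Definition b6_side (a : b6) : bool :=
  match a with b6_x | b6_y => true | _ => false end.
Definition b6_lvl (a : b6) : nat :=
  match a with b6_x | b6_y' => 1 | b6_y | b6_x' => 2 | _ => 0 end.

Definition b6_meet (a b : b6) : b6 :=
  match a, b with
  | b6_0, _ | _, b6_0 => b6_0
  | b6_1, c | c, b6_1 => c
  | _, _ => if Bool.eqb (b6_side a) (b6_side b)
            then (if Nat.leb (b6_lvl a) (b6_lvl b) then a else b)
            else b6_0
  end.

Definition b6_join (a b : b6) : b6 :=
  match a, b with
  | b6_1, _ | _, b6_1 => b6_1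
  | b6_0, c | c, b6_0 => c
  | _, _ => if Bool.eqb (b6_side a) (b6_side b)
            then (if Nat.leb (b6_lvl a) (b6_lvl b) then b else a)
            else b6_1
  end.

Definition b6_neg (a : b6) : b6 :=
  match a with
  | b6_0 => b6_1 | b6_1 => b6_0
  | b6_x => b6_x' | b6_x' => b6_x
  | b6_y => b6_y' | b6_y' => b6_y
  end.

Definition B6 : Alg := {| car := b6; ameet := b6_meet; ajoin := b6_join;
  aneg := b6_neg; azero := b6_0; aone := b6_1 |}.

(* ---- B8: 0 < z' < x < y < z < 1, z' < y' < x' < z ---- *)
Inductive b8 := b8_0 | b8_z' | b8_x | b8_y | b8_y' | b8_x' | b8_z | b8_1.

Definition b8_side (a : b8) : bool :=
  match a with b8_x | b8_y => true | _ => false end.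
Definition b8_lvl (a : b8) : nat :=
  match a with b8_x | b8_y' => 1 | b8_y | b8_x' => 2 | _ => 0 end.

Definition b8_meet (a b : b8) : b8 :=
  match a, b with
  | b8_0, _ | _, b8_0 => b8_0
  | b8_1, c | c, b8_1 => c
  | b8_z', _ | _, b8_z' => b8_z'
  | b8_z, c | c, b8_z => c
  | _, _ => if Bool.eqb (b8_side a) (b8_side b)
            then (if Nat.leb (b8_lvl a) (b8_lvl b) then a else b)
            else b8_z'
  end.

Definition b8_join (a b : b8) : b8 :=
  match a, b with
  | b8_1, _ | _, b8_1 => b8_1
  | b8_0, c | c, b8_0 => c
  | b8_z, _ | _, b8_z => b8_z
  | b8_z', c | c, b8_z' => c
  | _, _ => if Bool.eqb (b8_side a) (b8_side b)
            then (if Nat.leb (b8_lvl a) (b8_lvl b) then b else a)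
            else b8_z
  end.

Definition b8_neg (a : b8) : b8 :=
  match a with
  | b8_0 => b8_1 | b8_1 => b8_0
  | b8_z => b8_z' | b8_z' => b8_z
  | b8_x => b8_x' | b8_x' => b8_x
  | b8_y => b8_y' | b8_y' => b8_y
  end.

Definition B8 : Alg := {| car := b8; ameet := b8_meet; ajoin := b8_join;
  aneg := b8_neg; azero := b8_0; aone := b8_1 |}.

Example b6_chk1 : b6_meet b6_y b6_x' = b6_0 := eq_refl.
Example b6_chk2 : b6_join b6_x b6_y = b6_y := eq_refl.
Example b8_chk1 : b8_meet b8_y b8_x' = b8_z' := eq_refl.
Example b8_chk2 : b8_join b8_x b8_y' = b8_z := eq_refl.
Example b8_chk3 : b8_meet b8_z b8_x = b8_x := eq_refl.

(* The witness is the variety generated by one finite pseudo-Kleene lattice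
   A8.  It satisfies the identity
     x /\ (y' \/ (x /\ y)) = x /\ ((x /\ y) \/ (x /\ y)'),
   which fails in B6 and in B8 at x := y, y := x'; since a variety is closed
   under isomorphic copies, none of its members is isomorphic to B6 or B8.
   Yet A8 itself violates (SP2) at the pair c <= a'. *)
From Stdlib Require Import Bool List.
Import ListNotations.

Definition holds (A : Alg) (l r : term) : Prop :=
  forall v : nat -> A, teval A v l = teval A v r.

Definition identities (A : Alg) (e : term * term) : Prop :=
  holds A (fst e) (snd e).

Lemma models_identities (E : term * term -> Prop) (A B : Alg) :
  models E A -> models (identities A) B -> models E B.
Proof. intros HA HB e He. exact (HB e (HA e He)). Qed.

Lemma teval_ext (A : Alg) (v w : nat -> A) (t : term) :
  (forall n, v n = w n) -> teval A v t = teval A w t.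
Proof. intro Hvw; induction t; simpl; congruence. Qed.

Lemma teval_hom (A B : Alg) (f : A -> B) :
  (forall x y, f (ameet x y) = ameet (f x) (f y)) ->
  (forall x y, f (ajoin x y) = ajoin (f x) (f y)) ->
  (forall x, f (aneg x) = aneg (f x)) ->
  f azero = azero -> f aone = aone ->
  forall (v : nat -> A) (t : term), f (teval A v t) = teval B (fun n => f (v n)) t.
Proof.
  intros Hm Hj Hn H0 H1 v t; induction t; simpl;
    rewrite ?Hm, ?Hj, ?Hn; congruence.
Qed.

Lemma models_iso (E : term * term -> Prop) (A B : Alg) :
  iso A B -> models E A -> models E B.
Proof.
  intros [f [g [_ [Hfg [Hm [Hj [Hn [H0 H1]]]]]]]] HA e He w.
  assert (Hg := f_equal f (HA e He (fun n => g (w n)))).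
  rewrite !(teval_hom A B f Hm Hj Hn H0 H1) in Hg.
  now rewrite !(teval_ext B _ w _ (fun n => Hfg (w n))) in Hg.
Qed.

Notation X := (tVar 0).
Notation Y := (tVar 1).
Notation Z := (tVar 2).

Definition env {A : Alg} (x y z : A) (n : nat) : A :=
  match n with 0 => x | 1 => y | _ => z end.

Inductive pkl_identity : term * term -> Prop :=
| pkl_meetC : pkl_identity (tMeet X Y, tMeet Y X)
| pkl_meetA : pkl_identity (tMeet X (tMeet Y Z), tMeet (tMeet X Y) Z)
| pkl_joinC : pkl_identity (tJoin X Y, tJoin Y X)
| pkl_joinA : pkl_identity (tJoin X (tJoin Y Z), tJoin (tJoin X Y) Z)
| pkl_meetKU : pkl_identity (tMeet X (tJoin X Y), X)
| pkl_joinKI : pkl_identity (tJoin X (tMeet X Y), X)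
| pkl_meet0x : pkl_identity (tMeet tZero X, tZero)
| pkl_join1x : pkl_identity (tJoin tOne X, tOne)
| pkl_negK : pkl_identity (tNeg (tNeg X), X)
| pkl_neg_antitone : pkl_identity (tMeet (tNeg Y) (tNeg (tMeet X Y)), tNeg Y)
| pkl_kleene :
    pkl_identity (tMeet (tMeet X (tNeg X)) (tJoin Y (tNeg Y)), tMeet X (tNeg X)).

Lemma pkl_identity_PKL (A : Alg) : models pkl_identity A -> is_PKL A.
Proof.
  intro HA; repeat split.
  - intros x y; exact (HA _ pkl_meetC (env x y x)).
  - intros x y z; exact (HA _ pkl_meetA (env x y z)).
  - intros x y; exact (HA _ pkl_joinC (env x y x)).
  - intros x y z; exact (HA _ pkl_joinA (env x y z)).
  - intros x y; exact (HA _ pkl_meetKU (env x y x)).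
  - intros x y; exact (HA _ pkl_joinKI (env x y x)).
  - intros x; exact (HA _ pkl_meet0x (env x x x)).
  - intros x; exact (HA _ pkl_join1x (env x x x)).
  - intros x; exact (HA _ pkl_negK (env x x x)).
  - intros x y Hxy; unfold ale in *.
    assert (Hanti := HA _ pkl_neg_antitone (env x y x)); simpl in Hanti.
    now rewrite Hxy in Hanti.
  - intros x y; exact (HA _ pkl_kleene (env x y x)).
Qed.

(* 0 < a < b < b' < a' < 1,  0 < c < b',  b < c' < 1 *)
Inductive a8 := a8_0 | a8_a | a8_b | a8_c | a8_b' | a8_a' | a8_c' | a8_1.

Definition a8_le (u w : a8) : bool :=
  match u, w with
  | a8_0, _ | _, a8_1 => true
  | a8_a, (a8_a | a8_b | a8_b' | a8_a' | a8_c') => true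
  | a8_b, (a8_b | a8_b' | a8_a' | a8_c') => true
  | a8_c, (a8_c | a8_b' | a8_a') => true
  | a8_b', (a8_b' | a8_a') => true
  | a8_a', a8_a' | a8_c', a8_c' => true
  | _, _ => false
  end.

(* A linear extension of a8_le: the greatest common lower bound is the last
   one in this list, the least common upper bound the first one. *)
Definition a8_elems : list a8 :=
  [a8_0; a8_a; a8_b; a8_c; a8_b'; a8_a'; a8_c'; a8_1].

Definition a8_meet (u w : a8) : a8 :=
  last (filter (fun t => a8_le t u && a8_le t w) a8_elems) a8_0.

Definition a8_join (u w : a8) : a8 :=
  hd a8_1 (filter (fun t => a8_le u t && a8_le w t) a8_elems).

Definition a8_neg (u : a8) : a8 :=
  match u with
  | a8_0 => a8_1 | a8_1 => a8_0
  | a8_a => a8_a' | a8_a' => a8_a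
  | a8_b => a8_b' | a8_b' => a8_b
  | a8_c => a8_c' | a8_c' => a8_c
  end.

Definition A8 : Alg := {| car := a8; ameet := a8_meet; ajoin := a8_join;
  aneg := a8_neg; azero := a8_0; aone := a8_1 |}.

Ltac decide_A8 :=
  let v := fresh "v" in
  intro v; simpl; destruct (v 0), (v 1), (v 2); reflexivity.

Lemma A8_pkl : models pkl_identity A8.
Proof. intros e He; destruct He; decide_A8. Qed.

Definition sepL : term := tMeet X (tJoin (tNeg Y) (tMeet X Y)).
Definition sepR : term := tMeet X (tJoin (tMeet X Y) (tNeg (tMeet X Y))).

Lemma A8_sep : holds A8 sepL sepR.
Proof. decide_A8. Qed.

Lemma B6_not_sep : ~ holds B6 sepL sepR.
Proof.
  intro Hsep; assert (Hw := Hsep (@env B6 b6_y b6_x' b6_0)).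
  vm_compute in Hw; discriminate Hw.
Qed.

Lemma B8_not_sep : ~ holds B8 sepL sepR.
Proof.
  intro Hsep; assert (Hw := Hsep (@env B8 b8_y b8_x' b8_0)).
  vm_compute in Hw; discriminate Hw.
Qed.

Lemma A8_not_SPOML : ~ is_SPOML A8.
Proof.
  intros [_ SP2]; assert (Hca := SP2 a8_c a8_a' eq_refl).
  vm_compute in Hca; discriminate Hca.
Qed.

Theorem lemma4p4 :
  exists E : term * term -> Prop,
    (forall A : Alg, models E A -> is_PKL A) /\
    (forall A : Alg, models E A -> ~ iso A B6 /\ ~ iso A B8) /\
    (exists A : Alg, models E A /\ ~ is_SPOML A).
Proof.
  exists (identities A8); split; [| split].
  - intros A HA; exact (pkl_identity_PKL A (models_identities _ _ _ A8_pkl HA)).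
  - intros A HA; split; intro Hiso.
    + exact (B6_not_sep (models_iso _ _ _ Hiso HA (sepL, sepR) A8_sep)).
    + exact (B8_not_sep (models_iso _ _ _ Hiso HA (sepL, sepR) A8_sep)).
  - exists A8; split; [exact (fun e He => He) | exact A8_not_SPOML].
Qed.
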